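(* Every $1$-perfect orientation of a connected graph has at most one sink.
   Context: An orientation of a graph $G$ is $1$-perfect if for every vertex $v$ the out-neighborhood of $v$ is a clique in $G$. A sink is a vertex of out-degree $0$. *)

From mathcomp Require Import all_boot.
Set Implicit Arguments. Unset Strict Implicit. Unset Printing Implicit Defensive.

Definition simple_graph (T : finType) (e : rel T) : Prop :=
  symmetric e /\ irreflexive e.

Definition connected_graph (T : finType) (e : rel T) : Prop :=
  forall x y : T, connect e x y.

Definition orientation (T : finType) (e o : rel T) : Prop :=
  (forall x y, o x y -> e x y) /\
  (forall x y, e x y -> (o x y (+) o y x)).

Definition out_nbhd (T : finType) (o : rel T) (v : T) : {set T} :=
  [set w | o v w].

Definition is_clique (T : finType) (e : rel T) (A : {set T}) : Prop :=
  forall u w, u \in A -> w \in A -> u != w -> e u w.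

Definition one_perfect (T : finType) (e o : rel T) : Prop :=
  orientation e o /\ forall v, is_clique e (out_nbhd o v).

Definition sink (T : finType) (o : rel T) (v : T) : Prop :=
  #|out_nbhd o v| = 0.

(* Fix a sink u. The vertices with a directed path to u are closed under
   adjacency: if x reaches u through its out-neighbour x' and y is another
   neighbour of x, then either y -> x, or y and x' are both out-neighbours
   of x, hence adjacent, and y is handled by induction on the path from x'.
   By connectivity every vertex, in particular every other sink v, reaches u;
   but a sink reaches only itself. *)

From mathcomp Require Import all_boot.

Set Implicit Arguments.
Unset Strict Implicit.
Unset Printing Implicit Defensive.

Section Sinks.

Variables (T : finType) (o : rel T).

Lemma sink_arcF v w : sink o v -> o v w = false.
Proof. by move/card0_eq/(_ w); rewrite inE. Qed.

Lemma connect_from_sink v w : sink o v -> connect o v w -> w = v.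
Proof.
move=> sink_v /connectP[[|x p] /= p_path ->] //.
by move: p_path; rewrite sink_arcF.
Qed.

Variable e : rel T.
Hypothesis perfect : one_perfect e o.

Lemma one_perfect_connect_sink u x y :
  sink o u -> e x y -> connect o x u -> connect o y u.
Proof.
case: perfect => -[_ oriented] out_clique sink_u exy /connectP[p].
elim: p x exy => [|x' p IHp] x exy /=.
  move=> _ u_x; move: exy; rewrite -u_x => /oriented.
  by rewrite (sink_arcF y sink_u) /= => /connect1.
case/andP=> oxx' x'_path u_last.
have x'_u : connect o x' u by apply/connectP; exists p.
have [oyx|/negbTE noyx] := boolP (o y x).
  exact: connect_trans (connect1 oyx) (connect_trans (connect1 oxx') x'_u).
have oxy : o x y by move/oriented: exy; rewrite noyx addbF.
have [<- //|x'_ne_y] := eqVneq x' y.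
apply: IHp x'_path u_last.
by apply: (out_clique x) x'_ne_y; rewrite inE.
Qed.

End Sinks.

Theorem lemma2p9 (T : finType) (e o : rel T) :
  simple_graph e -> connected_graph e -> one_perfect e o ->
  forall u v : T, sink o u -> sink o v -> u = v.
Proof.
move=> [sym_e _] conn perfect u v sink_u sink_v.
have sym_conn := sym_connect_sym sym_e.
have closed_reach_u : closed e [pred x | connect o x u].
  apply: (intro_closed sym_conn) => x y exy; rewrite !inE.
  exact: (one_perfect_connect_sink perfect sink_u exy).
have v_u : connect o v u.
  have := closed_connect closed_reach_u (conn u v).
  by rewrite !inE connect0 => <-.
exact: connect_from_sink sink_v v_u.
Qed.
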